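(* Let $\mathfrak{G}$ be the Goldman Lie algebra of the closed torus over $\mathbb{Z}$, and define $G_0=\mathfrak{G}$ and $G_r=[\mathfrak{G},G_{r-1}]$ for $r\geq1$. Then the lower central series stabilizes: for every $r\geq 0$, $[\mathfrak{G},G_r]$ equals the $\mathbb{Z}$-submodule spanned by the elements $\gcd(i,j)\,a^ib^j$ for $i,j\in\mathbb{Z}\setminus\{0\}$, together with $n\,a^n$ and $n\,b^n$ for $n\in\mathbb{Z}\setminus\{0\}$.
   Context: Let $T^2=\Sigma_{1,0}$ be the closed oriented torus and $\hat\pi\cong\pi_1(T^2)\cong\mathbb{Z}^2$ its set of free homotopy classes of loops, written $a^ib^j$ with $a,b$ the standard generators. The Goldman bracket ($[\alpha,\beta]=\sum_{p\in\alpha\cap\beta}\epsilon(p)\,\alpha*_p\beta$ over transverse intersection points, extended bilinearly) is given on the torus by $[a^ib^j,a^kb^l]=(il-jk)\,a^{i+k}b^{j+l}$. The Goldman Lie algebra over $\mathbb{Z}$ is $\mathbb{Z}\hat\pi$ with this bracket; $[X,Y]$ denotes the $\mathbb{Z}$-span of brackets of elements of $X$ and $Y$. *)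

From HB Require Import structures.
From mathcomp Require Import all_boot all_order all_algebra.
From mathcomp Require Import finmap.
From mathcomp Require Import monalg.

Set Implicit Arguments.
Unset Strict Implicit.
Unset Printing Implicit Defensive.

Import GRing.Theory Num.Theory.
Local Open Scope ring_scope.

(* The Z-module Z[pi-hat] for the torus: pi-hat = Z^2, the class a^i b^j is
   encoded by the pair (i, j); the basis element a^i b^j is << (i, j) >>. *)
Definition Goldman := {malg int[(int * int)%type]}.

Definition mon (i j : int) : Goldman := << (i, j) >>.

Definition gbracket (x y : Goldman) : Goldman :=
  \sum_(p <- msupp x) \sum_(q <- msupp y)
     << (x@_p * y@_q * (p.1 * q.2 - p.2 * q.1)) *g (p.1 + q.1, p.2 + q.2) >>.

Definition zspan (P : Goldman -> Prop) (z : Goldman) : Prop :=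
  exists s : seq (int * Goldman),
    (forall c, c \in s -> P c.2) /\ z = \sum_(c <- s) c.1 *: c.2.

Definition brspan (X Y : Goldman -> Prop) : Goldman -> Prop :=
  zspan (fun w => exists x y, X x /\ Y y /\ w = gbracket x y).

Fixpoint lcs (r : nat) : Goldman -> Prop :=
  match r with
  | 0%N => fun _ => True
  | r'.+1 => brspan (fun _ => True) (lcs r')
  end.

Definition stable_span : Goldman -> Prop :=
  zspan (fun w =>
    (exists i j : int, i != 0 /\ j != 0 /\ w = << gcdz i j *g (i, j) >>)
    \/ (exists n : int, n != 0 /\ w = << n *g (n, 0) >>)
    \/ (exists n : int, n != 0 /\ w = << n *g (0, n) >>)).

(* A bracket [a^i b^j, a^k b^l] has coefficient i l - j k = i (j + l) - j (i + k),
   a multiple of gcd(i + k, j + l); hence every bracket, and so [G, G_r], lies in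
   the stable span.  Conversely, if u p + v q = gcd(p, q) then
   [a^(p+v) b^(q-u), a^(-v) b^u] = gcd(p, q) a^p b^q, where a^(-v) b^u is primitive
   since u and v are coprime.  Primitive monomials lie in the stable span, so by
   induction the stable span is contained in every G_r. *)
From HB Require Import structures.
From mathcomp Require Import all_boot all_order all_algebra.
From mathcomp Require Import finmap.
From mathcomp Require Import monalg.
From mathcomp Require Import ring.

Set Implicit Arguments.
Unset Strict Implicit.
Unset Printing Implicit Defensive.
Import GRing.Theory Num.Theory.
Local Open Scope ring_scope.

Lemma monalgUZ (R : comNzRingType) (K : choiceType) (c x : R) (k : K) :
  << (c * x) *g k >> = c *: << x *g k >> :> {malg R[K]}.
Proof.
by apply/malgP => k'; rewrite mcoeffZ !mcoeffU; case: (k == k'); rewrite ?mulr0.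
Qed.

Section ZSpan.

Variable P : Goldman -> Prop.

Lemma zspan0 : zspan P 0.
Proof. by exists [::]; split => //; rewrite big_nil. Qed.

Lemma zspan_gen w : P w -> zspan P w.
Proof.
move=> Pw; exists [:: (1, w)]; split; first by move=> c; rewrite inE => /eqP ->.
by rewrite big_seq1 scale1r.
Qed.

Lemma zspanD x y : zspan P x -> zspan P y -> zspan P (x + y).
Proof.
move=> [s [Ps ->]] [t [Pt ->]]; exists (s ++ t); split; last by rewrite big_cat.
by move=> c; rewrite mem_cat => /orP [/Ps | /Pt].
Qed.

Lemma zspanZ (a : int) x : zspan P x -> zspan P (a *: x).
Proof.
move=> [s [Ps ->]]; exists [seq (a * c.1, c.2) | c <- s]; split.
  by move=> c /mapP [d /Ps Pd ->].
by rewrite big_map scaler_sumr; apply: eq_bigr => c _; rewrite scalerA.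
Qed.

Lemma zspan_sum (I : Type) (s : seq I) (F : I -> Goldman) :
  (forall i, zspan P (F i)) -> zspan P (\sum_(i <- s) F i).
Proof.
move=> PF; elim: s => [|i s IHs]; first by rewrite big_nil; apply: zspan0.
by rewrite big_cons; apply: zspanD.
Qed.

Lemma zspan_sub (Q : Goldman -> Prop) :
  (forall w, Q w -> zspan P w) -> forall z, zspan Q z -> zspan P z.
Proof.
move=> QP z [s [Qs ->]]; elim: s Qs => [|c s IHs] Qs.
  by rewrite big_nil; apply: zspan0.
rewrite big_cons; apply: zspanD; first by apply/zspanZ/QP/Qs; rewrite mem_head.
by apply: IHs => d sd; apply: Qs; rewrite inE sd orbT.
Qed.

End ZSpan.

Lemma stable_span_dvd_gcd m n k : (gcdz m n %| k)%Z -> stable_span << k *g (m, n) >>.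
Proof.
have [->|m0] := eqVneq m 0; have [->|n0] := eqVneq n 0.
- by rewrite gcdz0 dvd0z => /eqP ->; rewrite monalgU0; apply: zspan0.
- rewrite gcd0z => dvd_nk; have /dvdzP [q ->] : (n %| k)%Z by rewrite dvdzE.
  by rewrite monalgUZ; apply/zspanZ/zspan_gen; right; right; exists n.
- rewrite gcdz0 => dvd_mk; have /dvdzP [q ->] : (m %| k)%Z by rewrite dvdzE.
  by rewrite monalgUZ; apply/zspanZ/zspan_gen; right; left; exists m.
- move=> /dvdzP [q ->]; rewrite monalgUZ; apply/zspanZ/zspan_gen; left.
  by exists m, n.
Qed.

Lemma stable_span_mon i j : coprimez i j -> stable_span (mon i j).
Proof. by move=> /eqP co_ij; apply: stable_span_dvd_gcd; rewrite co_ij dvd1z. Qed.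

Lemma gbracket_stable x y : stable_span (gbracket x y).
Proof.
apply: zspan_sum => p; apply: zspan_sum => q; apply/stable_span_dvd_gcd/dvdz_mull.
have -> : p.1 * q.2 - p.2 * q.1 = p.1 * (p.2 + q.2) - p.2 * (p.1 + q.1) by ring.
by apply: rpredB; apply: dvdz_mull; [apply: dvdz_gcdr | apply: dvdz_gcdl].
Qed.

Lemma gbracket_mon i j k l :
  gbracket (mon i j) (mon k l) = << (i * l - j * k) *g (i + k, j + l) >>.
Proof.
rewrite /gbracket /mon !msuppU oner_eq0 !big_seq_fset1.
by rewrite !mcoeffUU !mul1r.
Qed.

Section BracketSpan.

Variable Y : Goldman -> Prop.
Hypothesis Y_primitive : forall i j, coprimez i j -> Y (mon i j).

Lemma brspan_dvd_gcd p q k :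
  (gcdz p q %| k)%Z -> brspan (fun _ => True) Y << k *g (p, q) >>.
Proof.
move=> /dvdzP [c ->]; have [u v Duv co_uv] := egcdzP p q.
rewrite monalgUZ; apply/zspanZ/zspan_gen.
exists (mon (p + v) (q - u)), (mon (- v) u); split=> //; split.
  by apply: Y_primitive; rewrite coprimeNz coprimez_sym.
by rewrite gbracket_mon -Duv; congr << _ *g (_, _) >>; ring.
Qed.

Lemma stable_brspan z : stable_span z -> brspan (fun _ => True) Y z.
Proof.
apply: zspan_sub => w [[i [j [_ [_ ->]]]] | [[n [_ ->]] | [n [_ ->]]]].
- exact/brspan_dvd_gcd/dvdzz.
- by apply: brspan_dvd_gcd; rewrite gcdz0 dvdzE.
- by apply: brspan_dvd_gcd; rewrite gcd0z dvdzE.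
Qed.

End BracketSpan.

Lemma brspan_stable (Y : Goldman -> Prop) z :
  brspan (fun _ => True) Y z -> stable_span z.
Proof. by apply: zspan_sub => w [x [y [_ [_ ->]]]]; apply: gbracket_stable. Qed.

Lemma stable_lcs r z : stable_span z -> lcs r z.
Proof.
elim: r z => [|r IHr] z //= /stable_brspan; apply => i j co_ij.
exact/IHr/stable_span_mon.
Qed.

Theorem mainTheorem5 :
  forall (r : nat) (z : Goldman),
    brspan (fun _ => True) (lcs r) z <-> stable_span z.
Proof.
move=> r z; split; first exact: brspan_stable.
by apply: stable_brspan => i j /stable_span_mon /stable_lcs.
Qed.
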